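(* Assume (H1), $\lim_{x\to\infty}q(x)=\infty$, and $$\lim_{z\to\infty}\frac{q'(z)}{q(z)}\sqrt{M(z)}=0.$$ Then (i) $\lim_{z\to\infty}q(z)\sqrt{M(z)}=\infty$; (ii) (H2) holds; (iii) $\lim_{z\to\infty}\mathfrak m'(z)/\sqrt{\mathfrak m(z)}=0$.
   Context: Let $q\in C^1([0,\infty))$ and $\gamma(y)=2\int_0^yq$. (H1): $\int_0^\infty e^{\gamma(y)}\int_y^\infty e^{-\gamma(\xi)}d\xi\,dy<\infty$. (H2): $\lim_{x\to\infty}q(x)=\infty$ and $\lim_{x\to\infty}q'(x)/q(x)^2=0$. $M(z)=\int_z^\infty dy/q(y)$ (assumed finite for large $z$ as part of the hypothesis). $\mathfrak m(z)=2\int_z^\infty e^{\gamma(y)}\int_y^\infty e^{-\gamma(\xi)}d\xi\,dy$. *)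

From Stdlib Require Import Reals Lra ClassicalEpsilon.
Open Scope R_scope.

Definition is_RInt (f : R -> R) (a b v : R) : Prop :=
  exists pr : Riemann_integrable f a b, RiemannInt pr = v.

(* The Riemann integral of f over [a,b] (meaningful when it exists). *)
Definition RInt (f : R -> R) (a b : R) : R :=
  epsilon (inhabits 0) (fun v => is_RInt f a b v).

Definition improper_conv (f : R -> R) (a l : R) : Prop :=
  (forall b, a <= b -> exists v, is_RInt f a b v) /\
  (forall eps, 0 < eps -> exists B, forall b v, B < b -> is_RInt f a b v ->
      Rabs (v - l) < eps).

(* The value of int_a^infty f (meaningful when it converges). *)
Definition Iinf (f : R -> R) (a : R) : R :=
  epsilon (inhabits 0) (fun l => improper_conv f a l).

Definition lim_infty (f : R -> R) (l : R) : Prop :=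
  forall eps, 0 < eps -> exists B, forall x, B < x -> Rabs (f x - l) < eps.

Definition tends_infty (f : R -> R) : Prop :=
  forall A, exists B, forall x, B < x -> A < f x.

Definition gam (q : R -> R) (y : R) : R := 2 * RInt q 0 y.

Definition inner (q : R -> R) (y : R) : R :=
  Iinf (fun xi => exp (- gam q xi)) y.

Definition H1 (q : R -> R) : Prop :=
  (forall y, 0 <= y -> exists l, improper_conv (fun xi => exp (- gam q xi)) y l) /\
  (exists L, improper_conv (fun y => exp (gam q y) * inner q y) 0 L).

(* (H2), with dq the derivative q' *)
Definition H2 (q dq : R -> R) : Prop :=
  tends_infty q /\ lim_infty (fun x => dq x / (q x) ^ 2) 0.

Definition Mfun (q : R -> R) (z : R) : R := Iinf (fun y => / q y) z.

Definition mfrak (q : R -> R) (z : R) : R :=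
  2 * Iinf (fun y => exp (gam q y) * inner q y) z.

(* With P = q^2 M one has P' = q (2 (q sqrt M) (q'/q sqrt M) - 1): while P stays
   below a bound A, the hypothesis makes the bracket close to -1, so P decreases at
   rate about q/2; since P >= 0 this cannot go on, hence P -> oo, which is (i).  Then
   q'/q^2 = (q'/q sqrt M) / (q sqrt M) -> 0 gives (ii).  For (iii), with
   I = int_y^oo e^-gamma and G = e^-gamma / (2 q), one has
   G' = -e^-gamma (1 + q'/(2 q^2)); once |q'/q^2| <= 1 the functions I - 2G/3 and
   2G - I are nonincreasing with limit 0, so 1/(3q) <= e^gamma I <= 1/q.  Therefore
   m >= 2M/3, m' = -2 e^gamma I, and |m'| / sqrt m <= 3 / (q sqrt M) -> 0 by (i). *)

From Coquelicot Require Import Coquelicot.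
From Pilot Require Import Defs.
From Stdlib Require Import Reals Lra ClassicalEpsilon.
Open Scope R_scope.

(* Coquelicot's integral, renamed since [Defs] shadows [RInt] and [is_RInt]. *)
Notation CRInt := (@Coquelicot.RInt.RInt R_CompleteNormedModule).
Notation CisRInt := (@Coquelicot.RInt.is_RInt R_NormedModule).

Lemma lim_infty_is_lim f l : lim_infty f l <-> is_lim f p_infty l.
Proof.
  rewrite <- is_lim_spec. split.
  - intros H [eps Heps]. exact (H eps Heps).
  - intros H eps Heps. exact (H (mkposreal eps Heps)).
Qed.

Lemma tends_infty_is_lim f : tends_infty f <-> is_lim f p_infty p_infty.
Proof. rewrite <- is_lim_spec. reflexivity. Qed.

Lemma is_RInt_CisRInt f a b v : is_RInt f a b v -> CisRInt f a b v.
Proof.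
  intros [pr <-]. rewrite <- (RInt_Reals f a b pr).
  apply (RInt_correct (V := R_CompleteNormedModule)), ex_RInt_Reals_1; exact pr.
Qed.

Lemma ex_RInt_is_RInt f a b : ex_RInt f a b -> is_RInt f a b (CRInt f a b).
Proof. intros H. exists (ex_RInt_Reals_0 _ _ _ H). symmetry; apply RInt_Reals. Qed.

Lemma is_RInt_CRInt f a b v : is_RInt f a b v -> v = CRInt f a b.
Proof. intros H. symmetry. apply is_RInt_unique, is_RInt_CisRInt; exact H. Qed.

Lemma RInt_CRInt f a b : ex_RInt f a b -> RInt f a b = CRInt f a b.
Proof.
  intros H. apply is_RInt_CRInt.
  exact (epsilon_spec (inhabits 0) _ (ex_intro _ _ (ex_RInt_is_RInt f a b H))).
Qed.

Lemma derivable_pt_lim_CRInt f a x :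
  (forall t, a <= t -> ex_RInt f a t) -> a < x -> continuity_pt f x ->
  derivable_pt_lim (fun t => CRInt f a t) x (f x).
Proof.
  intros Hex Hx Hc. apply is_derive_Reals, (is_derive_RInt (V := R_NormedModule) _ _ a).
  - assert (Hp : 0 < x - a) by lra. exists (mkposreal _ Hp). intros t Ht.
    change (Rabs (t - x) < x - a) in Ht. apply Rabs_def2 in Ht.
    apply (RInt_correct (V := R_CompleteNormedModule)), Hex; lra.
  - apply continuity_pt_filterlim; exact Hc.
Qed.

Lemma improper_conv_spec f a L :
  improper_conv f a L <->
  (forall b, a <= b -> ex_RInt f a b) /\ is_lim (fun b => CRInt f a b) p_infty L.
Proof.
  split.
  - intros [Hex Hlim]. assert (Hex' : forall b, a <= b -> ex_RInt f a b).
    { intros b Hb. destruct (Hex b Hb) as [v Hv]. exists v. apply is_RInt_CisRInt; exact Hv. }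
    split; [exact Hex'|]. apply lim_infty_is_lim. intros eps Heps.
    destruct (Hlim eps Heps) as [B HB]. exists (Rmax B a). intros b Hb.
    pose proof (Rmax_l B a). pose proof (Rmax_r B a).
    apply (HB b); [lra|]. apply ex_RInt_is_RInt, Hex'; lra.
  - intros [Hex Hlim]. split.
    + intros b Hb. exists (CRInt f a b). apply ex_RInt_is_RInt, Hex, Hb.
    + intros eps Heps. apply lim_infty_is_lim in Hlim.
      destruct (Hlim eps Heps) as [B HB]. exists B. intros b v Hb Hv.
      rewrite (is_RInt_CRInt _ _ _ _ Hv). exact (HB b Hb).
Qed.

Lemma Iinf_eq f a L : improper_conv f a L -> Iinf f a = L.
Proof.
  intros H. unfold Iinf.
  pose proof (epsilon_spec (inhabits 0) _ (ex_intro _ _ H)) as H'.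
  apply improper_conv_spec in H as [_ H]. apply improper_conv_spec in H' as [_ H'].
  apply is_lim_unique in H. apply is_lim_unique in H'. rewrite H in H'. now injection H'.
Qed.

Lemma improper_conv_shift f a L b :
  improper_conv f a L -> a <= b -> improper_conv f b (L - CRInt f a b).
Proof.
  intros H Hab. apply improper_conv_spec in H as [Hex Hlim].
  apply improper_conv_spec. split.
  - intros c Hc. apply (ex_RInt_Chasles_2 f a b c); [lra | apply Hex; lra].
  - apply (is_lim_ext_loc (fun c => CRInt f a c - CRInt f a b)).
    + exists b. intros c Hc.
      assert (Hbc : ex_RInt f b c) by (apply (ex_RInt_Chasles_2 f a b c); [lra | apply Hex; lra]).
      rewrite <- (RInt_Chasles f a b c (Hex b Hab) Hbc). simpl. unfold plus; simpl. ring.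
    + eapply is_lim_minus; [exact Hlim | apply is_lim_const | reflexivity].
Qed.

Lemma Iinf_shift f a L b : improper_conv f a L -> a <= b -> Iinf f b = L - CRInt f a b.
Proof. intros H Hab. apply Iinf_eq, improper_conv_shift; assumption. Qed.

Lemma improper_conv_Iinf f a L b : improper_conv f a L -> a <= b -> improper_conv f b (Iinf f b).
Proof. intros H Hab. rewrite (Iinf_shift f a L b H Hab). apply improper_conv_shift; assumption. Qed.

Lemma derivable_pt_lim_Iinf f a L x :
  improper_conv f a L -> a < x -> continuity_pt f x -> derivable_pt_lim (Iinf f) x (- f x).
Proof.
  intros H Hx Hc. pose proof H as [Hex _]%improper_conv_spec.
  apply (derivable_pt_lim_locally_ext (fun t => L - CRInt f a t) _ x a (x + 1)); [lra | |].
  - intros t Ht. symmetry. apply (Iinf_shift f a L t H). lra.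
  - replace (- f x) with (0 - f x) by ring.
    apply (derivable_pt_lim_minus (fun _ => L)).
    + apply derivable_pt_lim_const.
    + apply derivable_pt_lim_CRInt; assumption.
Qed.

Lemma is_lim_Iinf f a L : improper_conv f a L -> is_lim (Iinf f) p_infty 0.
Proof.
  intros H. pose proof H as [_ Hlim]%improper_conv_spec.
  apply (is_lim_ext_loc (fun x => L - CRInt f a x)).
  - exists a. intros x Hx. symmetry. apply (Iinf_shift f a L x H). lra.
  - replace (Finite 0) with (Finite (L - L)) by (f_equal; ring).
    apply is_lim_minus'; [apply is_lim_const | exact Hlim].
Qed.

Lemma improper_conv_le f g a Lf Lg :
  improper_conv f a Lf -> improper_conv g a Lg -> (forall x, a < x -> f x <= g x) -> Lf <= Lg.
Proof.
  intros [Hexf Hf]%improper_conv_spec [Hexg Hg]%improper_conv_spec Hle.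
  apply (is_lim_le_loc (fun b => CRInt f a b) (fun b => CRInt g a b) p_infty Lf Lg);
    [| exact Hf | exact Hg].
  exists a. intros b Hb. apply RInt_le; [lra | apply Hexf; lra | apply Hexg; lra |].
  intros x Hx. apply Hle. lra.
Qed.

Lemma improper_conv_ge0 f a L :
  improper_conv f a L -> (forall x, a < x -> 0 <= f x) -> 0 <= L.
Proof.
  intros [Hex Hf]%improper_conv_spec Hpos.
  apply (is_lim_le_loc (fun _ => 0) (fun b => CRInt f a b) p_infty 0 L);
    [| apply is_lim_const | exact Hf].
  exists a. intros b Hb. apply RInt_ge_0; [lra | apply Hex; lra |].
  intros x Hx. apply Hpos. lra.
Qed.

Lemma improper_conv_scal f a L c :
  improper_conv f a L -> improper_conv (fun x => c * f x) a (c * L).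
Proof.
  intros [Hex Hf]%improper_conv_spec. apply improper_conv_spec. split.
  - intros b Hb. apply (ex_RInt_scal f a b c), Hex, Hb.
  - apply (is_lim_ext_loc (fun b => c * CRInt f a b)).
    + exists a. intros b Hb. symmetry.
      apply (RInt_scal (V := R_CompleteNormedModule) f a b c), Hex. lra.
    + apply (is_lim_scal_l _ c p_infty L), Hf.
Qed.

Lemma ge0_of_derive_le0 f f' a :
  (forall x, a < x -> derivable_pt_lim f x (f' x)) -> (forall x, a < x -> f' x <= 0) ->
  is_lim f p_infty 0 -> forall x, a < x -> 0 <= f x.
Proof.
  intros Hd Hs Hl x Hx.
  assert (Hdecr : forall y, x < y -> f y <= f x).
  { intros y Hy. destruct (MVT_cor2 f f' x y Hy) as [c [Hc Hcxy]].
    - intros c Hc. apply Hd. lra.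
    - assert (f' c * (y - x) <= 0) by (apply Rmult_le_0_r; [apply Hs | ]; lra). lra. }
  apply (is_lim_le_loc f (fun _ => f x) p_infty 0 (f x)); [| exact Hl | apply is_lim_const].
  exists x. exact Hdecr.
Qed.

Lemma lt_right_of_derive_neg f c l b :
  derivable_pt_lim f c l -> l < 0 -> c < b -> exists y, c < y <= b /\ f y < f c.
Proof.
  intros Hd Hl Hcb. destruct (Hd (- l) ltac:(lra)) as [[d Hdpos] Hdelta]; simpl in Hdelta.
  set (h := Rmin (d / 2) (b - c)).
  assert (Hh : 0 < h <= b - c /\ h < d).
  { unfold h. pose proof (Rmin_l (d / 2) (b - c)). pose proof (Rmin_r (d / 2) (b - c)).
    assert (0 < Rmin (d / 2) (b - c)) by (apply Rmin_pos; lra). lra. }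
  exists (c + h). split; [lra|].
  assert (Hdq : (f (c + h) - f c) / h < 0).
  { assert (Habs : Rabs h < d) by (rewrite Rabs_right; lra).
    specialize (Hdelta h ltac:(lra) Habs). apply Rabs_def2 in Hdelta. lra. }
  assert (Hprod : (f (c + h) - f c) / h * h < 0) by (apply Rmult_neg_pos; lra).
  replace ((f (c + h) - f c) / h * h) with (f (c + h) - f c) in Hprod by (field; lra).
  lra.
Qed.

Lemma sqr_mul_slope_neg q dq M t :
  2 < q -> 0 <= M -> 0 <= t -> q ^ 2 * M <= t ^ 2 ->
  Rabs (dq / q * sqrt M) <= / (4 * (t + 1)) -> 2 * q * dq * M - q + 1 < 0.
Proof.
  intros Hq HM Ht HP He.
  set (s := sqrt M) in *. assert (Hs : s * s = M) by apply sqrt_sqrt, HM.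
  assert (Hs0 : 0 <= s) by apply sqrt_pos.
  set (e := dq / q * s) in *.
  assert (Hqs : q * s <= t).
  { destruct (Rle_lt_dec (q * s) t) as [|Hlt]; [assumption|].
    rewrite <- Hs in HP. nra. }
  assert (Hte : t * / (4 * (t + 1)) <= / 4).
  { apply Rmult_le_reg_l with (4 * (t + 1)); [lra|].
    rewrite <- Rmult_assoc, (Rmult_comm _ t), Rmult_assoc, Rinv_r; lra. }
  assert (Hqse : q * s * e <= / 4).
  { apply Rle_trans with (q * s * Rabs e); [|apply Rle_trans with (t * / (4 * (t + 1)))].
    - apply Rmult_le_compat_l; [nra | apply Rle_abs].
    - apply Rmult_le_compat; [nra | apply Rabs_pos | exact Hqs | exact He].
    - exact Hte. }
  replace (2 * q * dq * M) with (2 * q * (q * s * e)) by (unfold e; rewrite <- Hs; field; lra).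
  nra.
Qed.

Section SqrMulTail.

Variables (q dq M : R -> R) (a : R).
Hypothesis q_gt2 : forall z, a < z -> 2 < q z.
Hypothesis M_ge0 : forall z, a < z -> 0 <= M z.
Hypothesis q_derive : forall z, a < z -> derivable_pt_lim q z (dq z).
Hypothesis M_derive : forall z, a < z -> derivable_pt_lim M z (- / q z).
Hypothesis dq_sqrtM_lim : is_lim (fun z => dq z / q z * sqrt (M z)) p_infty 0.

(* If q^2 M (z2) < A, the function q^2 M + (y - z2) is >= A + 1 at b = z2 + A + 1,
   so its minimum on [z2, b] is attained at some c < b where q^2 M < A.  There its
   slope is negative by [sqr_mul_slope_neg], contradicting minimality. *)
Lemma sqr_mul_tail_ge A : 0 <= A -> Rbar_locally p_infty (fun z => A <= q z ^ 2 * M z).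
Proof.
  intros HA. set (t := sqrt A). assert (Ht : t ^ 2 = A) by apply pow2_sqrt, HA.
  assert (Ht0 : 0 <= t) by apply sqrt_pos.
  assert (Hd : 0 < / (4 * (t + 1))) by (apply Rinv_0_lt_compat; lra).
  apply is_lim_spec in dq_sqrtM_lim. destruct (dq_sqrtM_lim (mkposreal _ Hd)) as [B HB].
  simpl in HB. exists (Rmax a B). intros z2 Hz2.
  pose proof (Rmax_l a B). pose proof (Rmax_r a B).
  destruct (Rle_lt_dec A (q z2 ^ 2 * M z2)) as [|HPz2]; [assumption|]. exfalso.
  set (Rf := fun y => q y ^ 2 * M y + (y - z2)).
  set (b := z2 + A + 1).
  assert (HdR : forall y, z2 <= y -> derivable_pt_lim Rf y (2 * q y * dq y * M y - q y + 1)).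
  { intros y Hy. pose proof (q_gt2 y ltac:(lra)).
    apply (derivable_pt_lim_ext (fun y => q y * q y * M y + (y - z2))); [intros; unfold Rf; ring|].
    replace (2 * q y * dq y * M y - q y + 1)
      with ((dq y * q y + q y * dq y) * M y + q y * q y * (- / q y) + (1 - 0)) by (field; lra).
    apply (derivable_pt_lim_plus (fun y => q y * q y * M y)).
    - apply (derivable_pt_lim_mult (fun y => q y * q y)); [|apply M_derive; lra].
      apply derivable_pt_lim_mult; apply q_derive; lra.
    - apply derivable_pt_lim_minus; [apply derivable_pt_lim_id | apply derivable_pt_lim_const]. }
  destruct (continuity_ab_min Rf z2 b) as [c [Hmin Hc]].
  { unfold b; lra. }
  { intros y Hy. apply derivable_continuous_pt. eexists. apply HdR. lra. }
  assert (Hb : A + 1 <= Rf b).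
  { unfold Rf, b. pose proof (M_ge0 (z2 + A + 1) ltac:(lra)).
    pose proof (pow2_ge_0 (q (z2 + A + 1))). nra. }
  assert (HRz2 : Rf z2 < A) by (unfold Rf; lra).
  pose proof (Hmin z2 ltac:(unfold b; lra)) as Hcz2.
  assert (Hcb : c < b).
  { destruct (Rle_lt_or_eq_dec c b (proj2 Hc)) as [|E]; [assumption|].
    rewrite E in Hcz2. lra. }
  assert (Hslope : 2 * q c * dq c * M c - q c + 1 < 0).
  { apply (sqr_mul_slope_neg (q c) (dq c) (M c) t);
      [apply q_gt2; lra | apply M_ge0; lra | exact Ht0 | |].
    - unfold Rf in Hcz2. lra.
    - rewrite <- (Rminus_0_r (dq c / q c * sqrt (M c))). left. apply HB. lra. }
  destruct (lt_right_of_derive_neg Rf c _ b (HdR c ltac:(lra)) Hslope Hcb) as [y [Hy HRy]].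
  pose proof (Hmin y ltac:(lra)). lra.
Qed.

Lemma is_lim_sqr_mul_tail : is_lim (fun z => q z ^ 2 * M z) p_infty p_infty.
Proof.
  apply is_lim_spec. intros A.
  destruct (sqr_mul_tail_ge (Rabs A + 1) ltac:(pose proof (Rabs_pos A); lra)) as [B HB].
  exists B. intros z Hz. pose proof (HB z Hz). pose proof (Rle_abs A). lra.
Qed.

End SqrMulTail.

Lemma derivable_pt_lim_exp_opp f x l :
  derivable_pt_lim f x l -> derivable_pt_lim (fun y => exp (- f y)) x (- exp (- f x) * l).
Proof.
  intros Hf. replace (- exp (- f x) * l) with (exp (- f x) * - l) by ring.
  apply (derivable_pt_lim_comp (fun y => - f y) exp).
  - apply derivable_pt_lim_opp, Hf.
  - apply derivable_pt_lim_exp.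
Qed.

Lemma derivable_pt_lim_exp_opp_div q dq gm y :
  0 < q y -> derivable_pt_lim q y (dq y) -> derivable_pt_lim gm y (2 * q y) ->
  derivable_pt_lim (fun y => exp (- gm y) / (2 * q y)) y
    (- exp (- gm y) * (1 + dq y / q y ^ 2 / 2)).
Proof.
  intros Hq Hdq Hdg.
  replace (- exp (- gm y) * (1 + dq y / q y ^ 2 / 2))
    with ((- exp (- gm y) * (2 * q y) * (2 * q y) - 2 * dq y * exp (- gm y)) / Rsqr (2 * q y))
    by (unfold Rsqr; field; lra).
  apply (derivable_pt_lim_div (fun y => exp (- gm y)) (fun y => 2 * q y)).
  - apply derivable_pt_lim_exp_opp, Hdg.
  - apply derivable_pt_lim_scal, Hdq.
  - lra.
Qed.

Lemma tail_integral_bounds (q dq gm I : R -> R) a :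
  (forall y, a < y -> 0 < q y) ->
  (forall y, a < y -> derivable_pt_lim q y (dq y)) ->
  (forall y, a < y -> derivable_pt_lim gm y (2 * q y)) ->
  (forall y, a < y -> derivable_pt_lim I y (- exp (- gm y))) ->
  (forall y, a < y -> Rabs (dq y / q y ^ 2) <= 1) ->
  is_lim I p_infty 0 -> is_lim (fun y => exp (- gm y) / (2 * q y)) p_infty 0 ->
  forall y, a < y ->
  2 / 3 * (exp (- gm y) / (2 * q y)) <= I y <= 2 * (exp (- gm y) / (2 * q y)).
Proof.
  intros Hq Hdq Hdg HdI Hr HI HG.
  set (G := fun y => exp (- gm y) / (2 * q y)) in *.
  set (G' := fun y => - exp (- gm y) * (1 + dq y / q y ^ 2 / 2)).
  assert (HdG : forall y, a < y -> derivable_pt_lim G y (G' y)).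
  { intros y Hy. apply derivable_pt_lim_exp_opp_div; auto. }
  assert (Hr' : forall y, a < y -> 0 < exp (- gm y) /\ - 1 <= dq y / q y ^ 2 <= 1).
  { intros y Hy. split; [apply exp_pos | apply Rabs_le_between, Hr, Hy]. }
  intros y Hy. split.
  - enough (0 <= I y - 2 / 3 * G y) by (unfold G in *; lra).
    apply (ge0_of_derive_le0 (fun y => I y - 2 / 3 * G y)
      (fun y => - exp (- gm y) - 2 / 3 * G' y) a); [| | | exact Hy].
    + intros x Hx. apply derivable_pt_lim_minus; [apply HdI, Hx|].
      apply derivable_pt_lim_scal, HdG, Hx.
    + intros x Hx. unfold G'. destruct (Hr' x Hx) as [He Hrx].
      set (r := dq x / q x ^ 2) in *. set (e := exp (- gm x)) in *. nra.
    + eapply is_lim_minus; [exact HI | apply (is_lim_scal_l G (2 / 3)), HG |].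
      unfold is_Rbar_minus, is_Rbar_plus. simpl. do 2 f_equal. ring.
  - enough (0 <= 2 * G y - I y) by (unfold G in *; lra).
    apply (ge0_of_derive_le0 (fun y => 2 * G y - I y)
      (fun y => 2 * G' y - - exp (- gm y)) a); [| | | exact Hy].
    + intros x Hx. apply derivable_pt_lim_minus; [|apply HdI, Hx].
      apply derivable_pt_lim_scal, HdG, Hx.
    + intros x Hx. unfold G'. destruct (Hr' x Hx) as [He Hrx].
      set (r := dq x / q x ^ 2) in *. set (e := exp (- gm x)) in *. nra.
    + eapply is_lim_minus; [apply (is_lim_scal_l G 2), HG | exact HI |].
      unfold is_Rbar_minus, is_Rbar_plus. simpl. do 2 f_equal. ring.
Qed.

Section TailAsymptotics.

Variables (q dq : R -> R) (z0 : R).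
Hypothesis q_derive : forall x, 0 <= x -> derivable_pt_lim q x (dq x).
Hypothesis inv_q_improper : forall z, z0 <= z -> exists l, improper_conv (fun y => / q y) z l.
Hypothesis q_lim : tends_infty q.
Hypothesis dq_sqrtM_lim : is_lim (fun z => dq z / q z * sqrt (Mfun q z)) p_infty 0.

Lemma q_continuity x : 0 <= x -> continuity_pt q x.
Proof. intros Hx. apply derivable_continuous_pt. exists (dq x). apply q_derive, Hx. Qed.

Lemma Mfun_improper_conv z : z0 <= z -> improper_conv (fun y => / q y) z (Mfun q z).
Proof.
  intros Hz. destruct (inv_q_improper z0 (Rle_refl z0)) as [L HL].
  apply (improper_conv_Iinf _ z0 L); assumption.
Qed.

Lemma Mfun_derive z : Rmax z0 0 < z -> q z <> 0 -> derivable_pt_lim (Mfun q) z (- / q z).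
Proof.
  intros Hz Hq. pose proof (Rmax_l z0 0). pose proof (Rmax_r z0 0).
  destruct (inv_q_improper z0 (Rle_refl z0)) as [L HL].
  apply (derivable_pt_lim_Iinf (fun y => / q y) z0 L); [exact HL | lra |].
  apply (continuity_pt_inv q); [apply q_continuity; lra | exact Hq].
Qed.

Lemma Mfun_ge0 z : z0 <= z -> (forall y, z < y -> 0 < q y) -> 0 <= Mfun q z.
Proof.
  intros Hz Hq. apply (improper_conv_ge0 (fun y => / q y) z).
  - apply Mfun_improper_conv, Hz.
  - intros y Hy. left. apply Rinv_0_lt_compat, Hq, Hy.
Qed.

Lemma q_sqr_Mfun_lim : is_lim (fun z => q z ^ 2 * Mfun q z) p_infty p_infty.
Proof.
  destruct (q_lim 2) as [B HB]. set (a := Rmax B (Rmax z0 0)).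
  assert (Ha : B <= a /\ Rmax z0 0 <= a /\ z0 <= a).
  { unfold a. pose proof (Rmax_l B (Rmax z0 0)). pose proof (Rmax_r B (Rmax z0 0)).
    pose proof (Rmax_l z0 0). lra. }
  assert (Hq : forall z, a < z -> 2 < q z) by (intros z Hz; apply HB; lra).
  apply (is_lim_sqr_mul_tail q dq (Mfun q) a Hq); [| | | exact dq_sqrtM_lim].
  - intros z Hz. apply Mfun_ge0; [lra|]. intros y Hy. pose proof (Hq y ltac:(lra)). lra.
  - intros z Hz. apply q_derive. pose proof (Rmax_r z0 0). lra.
  - intros z Hz. apply Mfun_derive; [lra | pose proof (Hq z Hz); lra].
Qed.

Lemma q_sqrt_Mfun_lim : is_lim (fun z => q z * sqrt (Mfun q z)) p_infty p_infty.
Proof.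
  apply (is_lim_ext_loc (fun z => sqrt (q z ^ 2 * Mfun q z))).
  - destruct (q_lim 0) as [B HB]. exists (Rmax B z0). intros z Hz.
    pose proof (Rmax_l B z0). pose proof (Rmax_r B z0).
    pose proof (HB z ltac:(lra)) as Hqz.
    rewrite sqrt_mult_alt by (apply pow2_ge_0). rewrite sqrt_pow2 by lra. reflexivity.
  - apply is_lim_sqrt_p, q_sqr_Mfun_lim.
Qed.

Lemma dq_div_sqr_lim : is_lim (fun z => dq z / q z ^ 2) p_infty 0.
Proof.
  apply (is_lim_ext_loc (fun z => dq z / q z * sqrt (Mfun q z) * / (q z * sqrt (Mfun q z)))).
  - pose proof q_sqrt_Mfun_lim as Hi. apply is_lim_spec in Hi. destruct (Hi 0) as [B1 HB1].
    destruct (q_lim 0) as [B2 HB2]. exists (Rmax B1 B2). intros z Hz.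
    pose proof (Rmax_l B1 B2). pose proof (Rmax_r B1 B2).
    pose proof (HB1 z ltac:(lra)). pose proof (HB2 z ltac:(lra)).
    assert (sqrt (Mfun q z) <> 0) by (intros E; rewrite E in *; lra).
    field. split; lra.
  - replace (Finite 0) with (Rbar_mult 0 (Rbar_inv p_infty)) by (simpl; f_equal; ring).
    apply is_lim_mult; [exact dq_sqrtM_lim | | exact I].
    apply is_lim_inv; [apply q_sqrt_Mfun_lim | discriminate].
Qed.

Variables (Le Lg : R).
Hypothesis exp_gam_improper : improper_conv (fun xi => exp (- gam q xi)) 0 Le.
Hypothesis mfrak_improper : improper_conv (fun y => exp (gam q y) * inner q y) 0 Lg.

Let g y := exp (gam q y) * inner q y.

Lemma gam_derive y : 0 < y -> derivable_pt_lim (gam q) y (2 * q y).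
Proof.
  intros Hy. assert (Hex : forall t, 0 <= t -> ex_RInt q 0 t).
  { intros t Ht. apply (ex_RInt_continuous (V := R_CompleteNormedModule)). intros x Hx.
    rewrite Rmin_left, Rmax_right in Hx by lra.
    apply continuity_pt_filterlim, q_continuity. lra. }
  apply (derivable_pt_lim_locally_ext (fun t => 2 * CRInt q 0 t) _ y 0 (y + 1)); [lra | |].
  - intros t Ht. unfold gam. rewrite RInt_CRInt by (apply Hex; lra). reflexivity.
  - apply derivable_pt_lim_scal, derivable_pt_lim_CRInt; [exact Hex | exact Hy |].
    apply q_continuity. lra.
Qed.

Lemma inner_derive y : 0 < y -> derivable_pt_lim (inner q) y (- exp (- gam q y)).
Proof.
  intros Hy. apply (derivable_pt_lim_Iinf (fun xi => exp (- gam q xi)) 0 Le); [assumption..|].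
  apply derivable_continuous_pt. eexists. apply derivable_pt_lim_exp_opp, gam_derive, Hy.
Qed.

Lemma exp_gam_div_lim : is_lim (fun y => exp (- gam q y) / (2 * q y)) p_infty 0.
Proof.
  destruct (q_lim 0) as [B HB]. set (a := Rmax B 0 + 1).
  assert (Ha : B < a /\ 0 < a).
  { unfold a. pose proof (Rmax_l B 0). pose proof (Rmax_r B 0). lra. }
  assert (Hgam : forall y, a <= y -> gam q a <= gam q y).
  { intros y Hy. destruct (Rle_lt_or_eq_dec a y Hy) as [Hlt | <-]; [|lra].
    destruct (MVT_cor2 (gam q) (fun y => 2 * q y) a y Hlt) as [c [Hc Hcy]].
    - intros c Hc. apply gam_derive. lra.
    - pose proof (HB c ltac:(lra)). assert (0 <= 2 * q c * (y - a)) by (apply Rmult_le_pos; lra).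
      lra. }
  apply (is_lim_le_le_loc (fun _ => 0) (fun y => exp (- gam q a) / 2 * / q y)).
  - exists a. intros y Hy. pose proof (HB y ltac:(lra)). pose proof (exp_pos (- gam q y)).
    split.
    + left. apply Rdiv_lt_0_compat; lra.
    + replace (exp (- gam q y) / (2 * q y)) with (exp (- gam q y) / 2 * / q y) by (field; lra).
      apply Rmult_le_compat_r; [left; apply Rinv_0_lt_compat; lra|].
      apply Rmult_le_compat_r; [lra|].
      assert (Hle : - gam q y <= - gam q a) by (pose proof (Hgam y ltac:(lra)); lra).
      destruct (Rle_lt_or_eq_dec _ _ Hle) as [Hlt | ->]; [left; apply exp_increasing, Hlt | lra].
  - apply is_lim_const.
  - replace (Finite 0) with (Rbar_mult (exp (- gam q a) / 2) (Rbar_inv p_infty))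
      by (simpl; f_equal; ring).
    apply is_lim_scal_l, is_lim_inv; [apply tends_infty_is_lim, q_lim | discriminate].
Qed.

Lemma g_bounds : exists B, forall y, B < y -> 0 < q y /\ / (3 * q y) <= g y <= / q y.
Proof.
  destruct (q_lim 0) as [B1 HB1].
  pose proof dq_div_sqr_lim as Hr. apply lim_infty_is_lim in Hr.
  destruct (Hr 1 Rlt_0_1) as [B2 HB2].
  set (a := Rmax (Rmax B1 B2) 0).
  assert (Ha : B1 <= a /\ B2 <= a /\ 0 <= a).
  { unfold a. pose proof (Rmax_l (Rmax B1 B2) 0). pose proof (Rmax_r (Rmax B1 B2) 0).
    pose proof (Rmax_l B1 B2). pose proof (Rmax_r B1 B2). lra. }
  assert (Hq : forall y, a < y -> 0 < q y) by (intros y Hy; apply HB1; lra).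
  pose proof (tail_integral_bounds q dq (gam q) (inner q) a Hq) as Hb.
  exists a. intros y Hy. split; [apply Hq, Hy|].
  destruct (Hb ltac:(intros; apply q_derive; lra) ltac:(intros; apply gam_derive; lra)
    ltac:(intros; apply inner_derive; lra)
    ltac:(intros x Hx; pose proof (HB2 x ltac:(lra)) as H; rewrite Rminus_0_r in H; lra)
    (is_lim_Iinf _ _ _ exp_gam_improper) exp_gam_div_lim y Hy) as [Hlo Hhi].
  pose proof (Hq y Hy). unfold g. rewrite exp_Ropp in Hlo, Hhi. pose proof (exp_pos (gam q y)).
  set (X := exp (gam q y)) in *. split.
  - replace (/ (3 * q y)) with (X * (2 / 3 * (/ X / (2 * q y)))) by (field; lra).
    apply Rmult_le_compat_l; lra.
  - replace (/ q y) with (X * (2 * (/ X / (2 * q y)))) by (field; lra).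
    apply Rmult_le_compat_l; lra.
Qed.

Lemma mfrak_derive z : 0 < z -> derivable_pt_lim (mfrak q) z (- 2 * g z).
Proof.
  intros Hz. replace (- 2 * g z) with (2 * - g z) by ring.
  apply derivable_pt_lim_scal, (derivable_pt_lim_Iinf g 0 Lg);
    [exact mfrak_improper | exact Hz |].
  apply derivable_continuous_pt. eexists.
  apply (derivable_pt_lim_mult (fun y => exp (gam q y))); [|apply inner_derive, Hz].
  apply (derivable_pt_lim_comp (gam q) exp); [apply gam_derive, Hz | apply derivable_pt_lim_exp].
Qed.

Lemma mfrak_ge : exists B, forall z, B < z -> 2 / 3 * Mfun q z <= mfrak q z.
Proof.
  destruct g_bounds as [B HB]. exists (Rmax B (Rmax z0 0)). intros z Hz.
  pose proof (Rmax_l B (Rmax z0 0)). pose proof (Rmax_r B (Rmax z0 0)).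
  pose proof (Rmax_l z0 0). pose proof (Rmax_r z0 0).
  enough (/ 3 * Mfun q z <= Iinf g z) by (unfold mfrak; fold g; lra).
  apply (improper_conv_le (fun y => / 3 * / q y) g z).
  - apply improper_conv_scal, Mfun_improper_conv. lra.
  - apply (improper_conv_Iinf g 0 Lg); [exact mfrak_improper | lra].
  - intros y Hy. destruct (HB y ltac:(lra)) as [Hq [Hg _]].
    replace (/ 3 * / q y) with (/ (3 * q y)) by (field; lra). exact Hg.
Qed.

(* Since [g <= 1/q] and [m >= 2 M / 3], [2 g q sqrt M <= 2 sqrt M <= 3 sqrt m]. *)
Lemma mfrak_ratio_lim : is_lim (fun z => - 2 * g z / sqrt (mfrak q z)) p_infty 0.
Proof.
  apply (is_lim_le_le_loc (fun z => - 3 * / (q z * sqrt (Mfun q z))) (fun _ => 0)).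
  - destruct g_bounds as [B1 HB1]. destruct mfrak_ge as [B2 HB2].
    pose proof q_sqrt_Mfun_lim as Hi. apply is_lim_spec in Hi. destruct (Hi 0) as [B3 HB3].
    exists (Rmax (Rmax B1 B2) (Rmax B3 z0)). intros z Hz.
    pose proof (Rmax_l (Rmax B1 B2) (Rmax B3 z0)).
    pose proof (Rmax_r (Rmax B1 B2) (Rmax B3 z0)).
    pose proof (Rmax_l B1 B2). pose proof (Rmax_r B1 B2).
    pose proof (Rmax_l B3 z0). pose proof (Rmax_r B3 z0).
    destruct (HB1 z ltac:(lra)) as [Hq [Hglo Hghi]]. pose proof (HB2 z ltac:(lra)) as Hm.
    pose proof (HB3 z ltac:(lra)) as Hqs.
    assert (HM : 0 <= Mfun q z).
    { apply Mfun_ge0; [lra|]. intros y Hy. apply HB1. lra. }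
    set (s := sqrt (Mfun q z)) in *. set (m := mfrak q z) in *.
    assert (Hs : s * s = Mfun q z /\ 0 < s).
    { split; [apply sqrt_sqrt, HM | nra]. }
    assert (Hsm : sqrt m * sqrt m = m /\ 0 < sqrt m).
    { split; [apply sqrt_sqrt; nra | apply sqrt_lt_R0; nra]. }
    assert (Hg0 : 0 < g z) by (eapply Rlt_le_trans; [|exact Hglo]; apply Rinv_0_lt_compat; lra).
    assert (Hgq : g z * q z <= 1).
    { apply Rmult_le_reg_r with (/ q z); [apply Rinv_0_lt_compat; lra|].
      replace (g z * q z * / q z) with (g z) by (field; lra). lra. }
    assert (Hkey : 2 * g z * q z * s <= 3 * sqrt m).
    { assert (2 * s <= 3 * sqrt m) by nra. nra. }
    split.
    + replace (- 2 * g z / sqrt m) with (- (2 * g z * q z * s) * / (q z * s * sqrt m))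
        by (field; nra).
      replace (- 3 * / (q z * s)) with (- (3 * sqrt m) * / (q z * s * sqrt m)) by (field; nra).
      apply Rmult_le_compat_r; [left; apply Rinv_0_lt_compat; nra | lra].
    + assert (0 < / sqrt m) by (apply Rinv_0_lt_compat; lra). unfold Rdiv. nra.
  - replace (Finite 0) with (Rbar_mult (- 3) (Rbar_inv p_infty)) by (simpl; f_equal; ring).
    apply is_lim_scal_l, is_lim_inv; [apply q_sqrt_Mfun_lim | discriminate].
  - apply is_lim_const.
Qed.

End TailAsymptotics.

Theorem lemma6p1 (q dq : R -> R)
  (Hder : forall x, 0 <= x -> derivable_pt_lim q x (dq x))
  (Hcont : forall x, 0 <= x -> continuity_pt dq x)
  (HM : exists z0, forall z, z0 <= z -> exists l, improper_conv (fun y => / q y) z l)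
  (Hh1 : H1 q)
  (Hqinf : tends_infty q)
  (Hlim : lim_infty (fun z => dq z / q z * sqrt (Mfun q z)) 0) :
  tends_infty (fun z => q z * sqrt (Mfun q z)) /\
  H2 q dq /\
  (exists dm : R -> R, exists z0 : R,
      (forall z, z0 < z -> derivable_pt_lim (mfrak q) z (dm z)) /\
      lim_infty (fun z => dm z / sqrt (mfrak q z)) 0).
Proof.
  destruct HM as [z0 HM]. destruct Hh1 as [Hexp [Lg Hg]].
  destruct (Hexp 0 (Rle_refl 0)) as [Le HLe].
  apply lim_infty_is_lim in Hlim.
  split; [|split; [split|]].
  - apply tends_infty_is_lim, (q_sqrt_Mfun_lim q dq z0 Hder HM Hqinf Hlim).
  - exact Hqinf.
  - apply lim_infty_is_lim, (dq_div_sqr_lim q dq z0 Hder HM Hqinf Hlim).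
  - exists (fun z => - 2 * (exp (gam q z) * inner q z)), 0. split.
    + exact (mfrak_derive q dq Hder Le Lg HLe Hg).
    + apply lim_infty_is_lim, (mfrak_ratio_lim q dq z0 Hder HM Hqinf Hlim Le Lg HLe Hg).
Qed.
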